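(* Let $\triangle PQR$ be a (closed, filled) triangle in $D$ and write $\psi=\psi_{\triangle PQR}$. The following are equivalent: (1) there exists $\alpha\in S^1$ with $\psi^5(\alpha)=\alpha$; (2) $\rho(\psi)=\frac{2}{5}$; (3) there exist five points $\alpha_0<\alpha_1<\alpha_2<\alpha_3<\alpha_4$ in $[0,1)$ such that $\psi(\pi(\alpha_i))=\pi(\alpha_j)$ whenever $j\equiv i+2 \pmod 5$; (4) there exists $\alpha\in S^1$ such that $\overline{\psi}^5(x)=x+2$ for $x\in\pi^{-1}(\alpha)$, where $\overline\psi$ is the lift of $\psi$ with $\overline\psi(0)\in[0,1)$.
   Context: $D$ is the open unit disk in $\mathbb R^2$, $S^1$ its boundary circle identified with $\mathbb R/\mathbb Z$ via the counterclockwise normalized angle, and $\pi:\mathbb R\to S^1$, $\pi(x)=x-\lfloor x\rfloor$. For a closed convex $U\subset D$ and $v\in S^1$, $\psi_U(v)$ is the point $w\in S^1\setminus\{v\}$ such that the line $vw$ meets $U$ and $U$ lies in the closed half-plane to the left of the directed line from $v$ to $w$; it is an orientation-preserving homeomorphism of $S^1$. For such $f$, $\rho(f)=\lim_{n\to\infty}(\overline f^n(x)-x)/n$ with $\overline f$ the lift to $\mathbb R$ satisfying $\overline f(0)\in[0,1)$. *)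

From Stdlib Require Import Reals Lra ClassicalEpsilon.
From Coquelicot Require Import Coquelicot.
Open Scope R_scope.

Definition pt := (R * R)%type.

Definition inD (p : pt) : Prop := fst p ^ 2 + snd p ^ 2 < 1.

(* pi : R -> S^1 = [0,1), pi x = x - floor x.  S^1 is represented by [0,1). *)
Definition piS (x : R) : R := x - IZR (Int_part x).

Definition cpt (t : R) : pt := (cos (2 * PI * t), sin (2 * PI * t)).

(* cross product (b - a) x (c - a): positive iff c is strictly left of the
   directed line a -> b. *)
Definition cross (a b c : pt) : R :=
  (fst b - fst a) * (snd c - snd a) - (snd b - snd a) * (fst c - fst a).

Definition in_triangle (P Q R0 : pt) (x : pt) : Prop :=
  exists a b c : R, 0 <= a /\ 0 <= b /\ 0 <= c /\ a + b + c = 1 /\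
    fst x = a * fst P + b * fst Q + c * fst R0 /\
    snd x = a * snd P + b * snd Q + c * snd R0.

Definition triangle_in_D (P Q R0 : pt) : Prop :=
  inD P /\ inD Q /\ inD R0 /\ cross P Q R0 <> 0.

Definition is_psi (U : pt -> Prop) (v w : R) : Prop :=
  0 <= w < 1 /\ cpt w <> cpt v /\
  (exists x, U x /\ cross (cpt v) (cpt w) x = 0) /\
  (forall x, U x -> 0 <= cross (cpt v) (cpt w) x).

(* psi_U as a function S^1 -> S^1 (the defining point is unique for the
   convex sets considered; it is selected by choice). *)
Definition psi (U : pt -> Prop) (v : R) : R :=
  epsilon (inhabits 0) (fun w => is_psi U (piS v) w).

Definition is_lift (f : R -> R) (F : R -> R) : Prop :=
  (forall x, continuous F x) /\
  (forall x, piS (F x) = f (piS x)) /\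
  0 <= F 0 < 1.

Definition rot_number (F : R -> R) : Rbar :=
  Lim_seq (fun n => (Nat.iter n F 0 - 0) / INR n).

(* Write x_k = F^k(x) for the lift F of psi = psi_PQR.  Since the chord from
   x to F x never degenerates, x < F x < x + 1, and F is an increasing lift of
   degree one.  The chord x_k x_(k+1) supports the triangle at one of its three
   vertices.  If x_4 <= x_0 + 1, then for i < j <= 3 both ends of the chord
   x_j x_(j+1) lie on the arc from x_(i+1) to x_i + 1, one of them strictly
   inside, so its points in the triangle lie strictly to the left of chord i:
   the four chords would touch four distinct vertices.  Hence x_4 > x_0 + 1.
   The triangle is not contained in a line, which gives x_2 < x_0 + 1, and
   together x_0 + 1 < x_5 < x_0 + 3.  So a periodic point of psi of period
   dividing 5 has x_5 = x_0 + 2, and each of the four conditions is equivalent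
   to the existence of such an x: for the rotation number by the classical
   theory of degree-one lifts (a continuous periodic displacement
   F^5 x - x - 2 without zeros is bounded away from 0), and for the five
   ordered points by reading off the cyclic order
   x_0 < x_3 - 1 < x_1 < x_4 - 1 < x_2 < x_0 + 1. *)

From Stdlib Require Import Reals Lra Lia ZArith List ClassicalEpsilon.
From Coquelicot Require Import Coquelicot.
Import ListNotations.
Open Scope R_scope.

Notation "f ^[ n ]" := (Nat.iter n f) (at level 5, format "f ^[ n ]").

(** * The projection to R/Z *)

Lemma piS_range x : 0 <= piS x < 1.
Proof. unfold piS. destruct (base_Int_part x). lra. Qed.

Lemma piS_eq_intro x y k : 0 <= y < 1 -> x = y + IZR k -> piS x = y.
Proof.
  intros Hy Hx. destruct (Int_part_frac_part_spec x k y Hy) as [Hk _]; [lra|].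
  unfold piS. rewrite <- Hk. lra.
Qed.

Lemma piS_plus_IZR x k : piS (x + IZR k) = piS x.
Proof.
  apply piS_eq_intro with (k := (k + Int_part x)%Z); [apply piS_range|].
  unfold piS. rewrite plus_IZR. ring.
Qed.

Lemma piS_id y : 0 <= y < 1 -> piS y = y.
Proof. intros Hy. apply piS_eq_intro with (k := 0%Z); [exact Hy | simpl; ring]. Qed.

Lemma piS_minus1 x : piS (x - 1) = piS x.
Proof. rewrite <- (piS_plus_IZR (x - 1) 1). f_equal. simpl. ring. Qed.

Lemma piS_eq_int_shift x y : piS x = piS y -> exists k, x = y + IZR k.
Proof.
  unfold piS; intros H. exists (Int_part x - Int_part y)%Z. rewrite minus_IZR. lra.
Qed.

Lemma piS_int_shift x : exists k, x = piS x + IZR k.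
Proof. exists (Int_part x). unfold piS. ring. Qed.

Lemma periodic_plus_IZR {A : Type} (g : R -> A) :
  (forall x, g (x + 1) = g x) -> forall x k, g (x + IZR k) = g x.
Proof.
  intros Hg.
  assert (Hnat : forall y n, g (y + INR n) = g y).
  { intros y n. induction n as [|n IH]; [simpl; rewrite Rplus_0_r; reflexivity|].
    rewrite S_INR, <- Rplus_assoc, Hg. exact IH. }
  intros x k. destruct (Z_le_gt_dec 0 k) as [Hk|Hk].
  - rewrite <- (Z2Nat.id k Hk), <- INR_IZR_INZ. apply Hnat.
  - replace k with (- Z.of_nat (Z.to_nat (- k)))%Z by lia.
    rewrite opp_IZR, <- INR_IZR_INZ, <- (Hnat _ (Z.to_nat (- k))).
    f_equal. ring.
Qed.

Lemma degree_one_plus_IZR (f : R -> R) :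
  (forall x, f (x + 1) = f x + 1) -> forall x k, f (x + IZR k) = f x + IZR k.
Proof.
  intros Hf x k.
  pose proof (periodic_plus_IZR (fun y => f y - y)) as Hg.
  assert (f (x + IZR k) - (x + IZR k) = f x - x) by (apply Hg; intro y; rewrite Hf; ring).
  lra.
Qed.

Lemma is_lift_iter f F : is_lift f F -> forall n x, piS (F^[n] x) = f^[n] (piS x).
Proof.
  intros (_ & HF & _) n x. induction n as [|n IH]; [reflexivity|].
  simpl. rewrite HF, IH. reflexivity.
Qed.

(** * Rotation numbers of increasing degree-one lifts *)

Lemma continuous_Rplus (f g : R -> R) x :
  continuous f x -> continuous g x -> continuous (fun y => f y + g y) x.
Proof. apply (continuous_plus f g). Qed.

Lemma continuous_Rminus (f g : R -> R) x :
  continuous f x -> continuous g x -> continuous (fun y => f y - g y) x.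
Proof. apply (continuous_minus f g). Qed.

Lemma continuous_Rmult (f g : R -> R) x :
  continuous f x -> continuous g x -> continuous (fun y => f y * g y) x.
Proof. apply (continuous_mult f g). Qed.

Lemma continuous_Rmin (f g : R -> R) x :
  continuous f x -> continuous g x -> continuous (fun y => Rmin (f y) (g y)) x.
Proof.
  intros Hf Hg.
  apply (continuous_ext (fun y => (f y + g y - Rabs (f y - g y)) / 2)).
  - intros y. unfold Rmin. destruct (Rle_dec (f y) (g y)).
    + rewrite Rabs_left1 by lra. lra.
    + rewrite Rabs_right by lra. lra.
  - apply continuous_Rmult; [|apply continuous_const].
    apply continuous_Rminus; [apply continuous_Rplus; assumption|].
    apply continuous_Rabs_comp, continuous_Rminus; assumption.
Qed.

Lemma is_lim_seq_plus_div_INR c K : is_lim_seq (fun n => c + K / INR n) c.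
Proof.
  assert (H : is_lim_seq (fun n => c + K * / INR n) (c + K * 0)).
  { apply is_lim_seq_plus'; [apply is_lim_seq_const|].
    apply is_lim_seq_mult'; [apply is_lim_seq_const|].
    apply (is_lim_seq_inv _ p_infty); [apply is_lim_seq_INR|discriminate]. }
  rewrite Rmult_0_r, Rplus_0_r in H. exact H.
Qed.

Lemma Lim_seq_div_INR_ge (u : nat -> R) c K :
  (forall n, c * INR n - K <= u n) -> Rbar_le c (Lim_seq (fun n => u n / INR n)).
Proof.
  intros H. rewrite <- (is_lim_seq_unique _ _ (is_lim_seq_plus_div_INR c (- K))).
  apply Lim_seq_le_loc. exists 1%nat. intros n Hn.
  assert (0 < INR n) by (apply lt_0_INR; lia).
  specialize (H n). apply (Rmult_le_reg_r (INR n)); [assumption|].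
  field_simplify; lra.
Qed.

Lemma Lim_seq_div_INR_le (u : nat -> R) c K :
  (forall n, u n <= c * INR n + K) -> Rbar_le (Lim_seq (fun n => u n / INR n)) c.
Proof.
  intros H. rewrite <- (is_lim_seq_unique _ _ (is_lim_seq_plus_div_INR c K)).
  apply Lim_seq_le_loc. exists 1%nat. intros n Hn.
  assert (0 < INR n) by (apply lt_0_INR; lia).
  specialize (H n). apply (Rmult_le_reg_r (INR n)); [assumption|].
  field_simplify; lra.
Qed.

Lemma Lim_seq_div_INR_eq (u : nat -> R) c K :
  (forall n, Rabs (u n - c * INR n) <= K) -> Lim_seq (fun n => u n / INR n) = c.
Proof.
  intros H. apply Rbar_le_antisym.
  - apply (Lim_seq_div_INR_le _ _ K). intros n.
    pose proof (proj1 (Rabs_le_between' _ _ _) (H n)). lra.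
  - apply (Lim_seq_div_INR_ge _ _ K). intros n.
    pose proof (proj1 (Rabs_le_between' _ _ _) (H n)). lra.
Qed.

Lemma Rabs_ratio_le c a b : 0 <= a < b -> Rabs (c * a / b) <= Rabs c.
Proof.
  intros Hab. assert (0 <= a / b < 1).
  { split; [apply Rdiv_le_0_compat; lra|]. apply (Rmult_lt_reg_r b); [lra|]. field_simplify; lra. }
  unfold Rdiv. rewrite Rmult_assoc, Rabs_mult, (Rabs_pos_eq (a * / b)) by lra.
  pose proof (Rabs_pos c). nra.
Qed.

Lemma INR_div_mod n N :
  (0 < n)%nat ->
  INR N = INR n * INR (N / n) + INR (N mod n) /\ 0 <= INR (N mod n) < INR n.
Proof.
  intros Hn. split.
  - rewrite (Nat.div_mod_eq N n) at 1. rewrite plus_INR, mult_INR. reflexivity.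
  - split; [apply pos_INR|apply lt_INR, Nat.mod_upper_bound; lia].
Qed.

Lemma continuous_periodic_bounded_away (G : R -> R) :
  (forall x, continuous G x) -> (forall x, G (x + 1) = G x) -> (forall x, G x <> 0) ->
  exists eps, 0 < eps /\ ((forall x, eps <= G x) \/ (forall x, G x <= - eps)).
Proof.
  intros Gc Gper Gz.
  assert (Gpi : forall x, G x = G (piS x)).
  { intros x. destruct (piS_int_shift x) as [k Hk].
    rewrite Hk at 1. apply periodic_plus_IZR, Gper. }
  assert (Gcp : forall x, continuity_pt G x) by (intro; apply continuity_pt_filterlim, Gc).
  assert (Hsign : forall x y, 0 < G x -> 0 < G y).
  { intros x y Hx. destruct (Rlt_dec 0 (G y)) as [|Hy]; [assumption|exfalso].
    destruct (IVT_gen_consistent G x y 0 Gc) as [z [_ Hz]].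
    - unfold Rmin, Rmax; destruct (Rle_dec (G x) (G y)); lra.
    - exact (Gz z Hz). }
  destruct (Rlt_dec 0 (G 0)) as [H0|H0].
  - destruct (continuity_ab_min G 0 1 ltac:(lra) (fun c _ => Gcp c)) as [m [Hm _]].
    exists (G m). split; [exact (Hsign 0 m H0)|left].
    intros x. rewrite (Gpi x). pose proof (piS_range x). apply Hm. lra.
  - destruct (continuity_ab_maj G 0 1 ltac:(lra) (fun c _ => Gcp c)) as [m [Hm _]].
    assert (Hneg : G m < 0).
    { destruct (Rlt_dec (G m) 0) as [|Hm0]; [assumption|].
      pose proof (Gz m). assert (0 < G m) by lra.
      pose proof (Gz 0). pose proof (Hsign m 0 H1). lra. }
    exists (- G m). split; [lra|right].
    intros x. rewrite (Gpi x), Ropp_involutive. pose proof (piS_range x). apply Hm. lra.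
Qed.

Section DegreeOneLift.

Variable F : R -> R.
Hypothesis F_cont : forall x, continuous F x.
Hypothesis F_plus1 : forall x, F (x + 1) = F x + 1.
Hypothesis F_le : forall x y, x <= y -> F x <= F y.

Lemma iter_plus_IZR n x k : F^[n] (x + IZR k) = F^[n] x + IZR k.
Proof.
  induction n as [|n IH]; [reflexivity|].
  simpl. rewrite IH. apply degree_one_plus_IZR, F_plus1.
Qed.

Lemma iter_plus_INR n x m : F^[n] (x + INR m) = F^[n] x + INR m.
Proof. rewrite INR_IZR_INZ. apply iter_plus_IZR. Qed.

Lemma iter_le n x y : x <= y -> F^[n] x <= F^[n] y.
Proof. induction n as [|n IH]; simpl; auto. Qed.

Lemma iter_continuous n x : continuous F^[n] x.
Proof.
  revert x. induction n as [|n IH]; intros x; [apply continuous_id|].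
  apply (continuous_comp F^[n] F); [apply IH|apply F_cont].
Qed.

Lemma iter_disp_close n x y : Rabs ((F^[n] y - y) - (F^[n] x - x)) <= 1.
Proof.
  destruct (piS_int_shift (y - x)) as [k Hk]. pose proof (piS_range (y - x)).
  pose proof (iter_le n (x + IZR k) y ltac:(lra)) as Hlo.
  pose proof (iter_le n y (x + IZR (k + 1)) ltac:(rewrite plus_IZR; lra)) as Hhi.
  rewrite iter_plus_IZR in Hlo, Hhi. rewrite plus_IZR in Hhi.
  apply Rabs_le. lra.
Qed.

Lemma iter_disp_bounded n : exists M, forall r z, (r < n)%nat -> Rabs (F^[r] z - z) <= M.
Proof.
  induction n as [|n [M HM]]; [exists 0; intros; lia|].
  exists (Rmax M (Rabs (F^[n] 0 - 0) + 1)). intros r z Hr.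
  destruct (Nat.eq_dec r n) as [->|Hrn].
  - eapply Rle_trans; [|apply Rmax_r].
    pose proof (iter_disp_close n 0 z). pose proof (Rabs_triang_inv (F^[n] z - z) (F^[n] 0 - 0)).
    lra.
  - eapply Rle_trans; [apply HM; lia|apply Rmax_l].
Qed.

Lemma iter_mul_disp_ge n c : (forall z, c <= F^[n] z - z) ->
  forall q z, INR q * c <= F^[n * q] z - z.
Proof.
  intros H q z. induction q as [|q IH]; [rewrite Nat.mul_0_r; simpl; lra|].
  replace (n * S q)%nat with (n + n * q)%nat by lia.
  rewrite Nat.iter_add, S_INR. pose proof (H (F^[n * q] z)). lra.
Qed.

Lemma iter_mul_disp_le n c : (forall z, F^[n] z - z <= c) ->
  forall q z, F^[n * q] z - z <= INR q * c.
Proof.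
  intros H q z. induction q as [|q IH]; [rewrite Nat.mul_0_r; simpl; lra|].
  replace (n * S q)%nat with (n + n * q)%nat by lia.
  rewrite Nat.iter_add, S_INR. pose proof (H (F^[n * q] z)). lra.
Qed.

Lemma iter_mul_periodic n m x0 : F^[n] x0 = x0 + INR m ->
  forall q, F^[n * q] x0 = x0 + INR q * INR m.
Proof.
  intros H q. induction q as [|q IH]; [rewrite Nat.mul_0_r; simpl; ring|].
  replace (n * S q)%nat with (n * q + n)%nat by lia.
  rewrite Nat.iter_add, H, iter_plus_INR, IH, S_INR. ring.
Qed.

Lemma rot_number_ge n c : (0 < n)%nat -> (forall z, c <= F^[n] z - z) ->
  Rbar_le (c / INR n) (rot_number F).
Proof.
  intros Hn Hc. destruct (iter_disp_bounded n) as [M HM].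
  apply (Lim_seq_div_INR_ge _ _ (M + Rabs c)). intros N.
  destruct (INR_div_mod n N Hn) as [EN Hr].
  pose proof (iter_mul_disp_ge n c Hc (N / n) (F^[N mod n] 0)) as Hq.
  rewrite <- Nat.iter_add, <- Nat.div_mod_eq in Hq.
  pose proof (HM (N mod n)%nat 0 (Nat.mod_upper_bound N n ltac:(lia))) as Hr0.
  pose proof (Rabs_ratio_le c _ _ Hr) as Hcr.
  apply Rabs_le_between' in Hr0. apply Rabs_le_between in Hcr.
  replace (c / INR n * INR N) with (INR (N / n) * c + c * INR (N mod n) / INR n)
    by (rewrite EN; field; lra).
  lra.
Qed.

Lemma rot_number_le n c : (0 < n)%nat -> (forall z, F^[n] z - z <= c) ->
  Rbar_le (rot_number F) (c / INR n).
Proof.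
  intros Hn Hc. destruct (iter_disp_bounded n) as [M HM].
  apply (Lim_seq_div_INR_le _ _ (M + Rabs c)). intros N.
  destruct (INR_div_mod n N Hn) as [EN Hr].
  pose proof (iter_mul_disp_le n c Hc (N / n) (F^[N mod n] 0)) as Hq.
  rewrite <- Nat.iter_add, <- Nat.div_mod_eq in Hq.
  pose proof (HM (N mod n)%nat 0 (Nat.mod_upper_bound N n ltac:(lia))) as Hr0.
  pose proof (Rabs_ratio_le c _ _ Hr) as Hcr.
  apply Rabs_le_between' in Hr0. apply Rabs_le_between in Hcr.
  replace (c / INR n * INR N) with (INR (N / n) * c + c * INR (N mod n) / INR n)
    by (rewrite EN; field; lra).
  lra.
Qed.

Lemma rot_number_periodic n m x0 : (0 < n)%nat -> F^[n] x0 = x0 + INR m ->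
  rot_number F = Finite (INR m / INR n).
Proof.
  intros Hn Hx0. destruct (iter_disp_bounded n) as [M HM].
  unfold rot_number. apply (Lim_seq_div_INR_eq _ _ (M + 1 + INR m)). intros N.
  destruct (INR_div_mod n N Hn) as [EN Hr].
  assert (HN : F^[N] x0 = F^[N mod n] x0 + INR (N / n) * INR m).
  { rewrite <- mult_INR, <- iter_plus_INR, mult_INR, <- (iter_mul_periodic n m x0 Hx0),
      <- Nat.iter_add.
    f_equal. pose proof (Nat.div_mod_eq N n). lia. }
  pose proof (iter_disp_close N x0 0) as Hclose.
  pose proof (HM (N mod n)%nat x0 (Nat.mod_upper_bound N n ltac:(lia))) as Hr0.
  pose proof (Rabs_ratio_le (INR m) _ _ Hr) as Hmr.
  rewrite (Rabs_pos_eq (INR m)) in Hmr by apply pos_INR.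
  replace (INR m / INR n * INR N) with (INR (N / n) * INR m + INR m * INR (N mod n) / INR n)
    by (rewrite EN; field; lra).
  apply Rabs_le_between' in Hr0. apply Rabs_le_between in Hmr, Hclose. apply Rabs_le. lra.
Qed.

Lemma periodic_of_rot_number n c : (0 < n)%nat -> rot_number F = Finite (c / INR n) ->
  exists x, F^[n] x = x + c.
Proof.
  intros Hn Hrot. apply NNPP. intros Hno.
  set (G := fun x => F^[n] x - x - c).
  destruct (continuous_periodic_bounded_away G) as (eps & Heps & [Hge|Hle]).
  - intros x. apply continuous_Rminus; [|apply continuous_const].
    apply continuous_Rminus; [apply iter_continuous|apply continuous_id].
  - intros x. unfold G. change 1 with (IZR 1). rewrite iter_plus_IZR. ring.
  - intros x Hx. apply Hno. exists x. unfold G in Hx. lra.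
  - pose proof (rot_number_ge n (c + eps) Hn) as H.
    rewrite Hrot in H. simpl in H.
    assert (c + eps <= c) as Hc; [|lra].
    apply (Rmult_le_reg_r (/ INR n)); [apply Rinv_0_lt_compat, lt_0_INR; lia|].
    apply H. intros z. specialize (Hge z). unfold G in Hge. lra.
  - pose proof (rot_number_le n (c - eps) Hn) as H.
    rewrite Hrot in H. simpl in H.
    assert (c <= c - eps) as Hc; [|lra].
    apply (Rmult_le_reg_r (/ INR n)); [apply Rinv_0_lt_compat, lt_0_INR; lia|].
    apply H. intros z. specialize (Hle z). unfold G in Hle. lra.
Qed.

End DegreeOneLift.

(** * Chords of the unit circle *)

Lemma cpt_plus1 t : cpt (t + 1) = cpt t.
Proof.
  unfold cpt. replace (2 * PI * (t + 1)) with (2 * PI * t + 2 * INR 1 * PI) by (simpl; ring).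
  rewrite cos_period, sin_period. reflexivity.
Qed.

Lemma cpt_plus_IZR t k : cpt (t + IZR k) = cpt t.
Proof. apply periodic_plus_IZR, cpt_plus1. Qed.

Lemma cpt_piS t : cpt (piS t) = cpt t.
Proof. destruct (piS_int_shift t) as [k Hk]. rewrite Hk at 2. symmetry. apply cpt_plus_IZR. Qed.

Lemma cpt_on_circle t : fst (cpt t) ^ 2 + snd (cpt t) ^ 2 = 1.
Proof. unfold cpt; simpl. pose proof (sin2_cos2 (2 * PI * t)). unfold Rsqr in *. lra. Qed.

Lemma cross_cpt_cpt s t X :
  cross (cpt s) (cpt t) X =
  2 * sin (PI * t - PI * s) * (cos (PI * t - PI * s) -
     (fst X * cos (PI * s + PI * t) + snd X * sin (PI * s + PI * t))).
Proof.
  unfold cross, cpt; simpl.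
  set (A := PI * s). set (B := PI * t).
  replace (2 * PI * s) with (2 * A) by (unfold A; ring).
  replace (2 * PI * t) with (2 * B) by (unfold B; ring).
  assert (E1 : cos (2 * B) - cos (2 * A) = -2 * sin (B - A) * sin (A + B)).
  { rewrite form2. f_equal; [f_equal; f_equal; field | f_equal; field]. }
  assert (E2 : sin (2 * B) - sin (2 * A) = 2 * cos (A + B) * sin (B - A)).
  { rewrite form4. f_equal; [f_equal; f_equal; field | f_equal; field]. }
  assert (E3 : cos (B - A) = cos (A + B) * cos (2 * A) + sin (A + B) * sin (2 * A)).
  { replace (B - A) with ((A + B) - 2 * A) by ring. apply cos_minus. }
  rewrite E1, E2, E3. ring.
Qed.

Lemma cross_cpt3 s t r :
  cross (cpt s) (cpt t) (cpt r) =
  4 * sin (PI * (t - s)) * sin (PI * (r - t)) * sin (PI * (r - s)).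
Proof.
  rewrite cross_cpt_cpt. unfold cpt at 1 2; simpl.
  set (A := PI * s). set (B := PI * t). set (C := PI * r).
  replace (2 * PI * r) with (2 * C) by (unfold C; ring).
  assert (E : cos (2 * C) * cos (A + B) + sin (2 * C) * sin (A + B) = cos (2 * C - (A + B)))
    by (rewrite cos_minus; ring).
  replace (PI * (t - s)) with (B - A) by (unfold A, B; ring).
  replace (PI * (r - t)) with (C - B) by (unfold B, C; ring).
  replace (PI * (r - s)) with (C - A) by (unfold A, C; ring).
  rewrite E, form2.
  replace ((B - A - (2 * C - (A + B))) / 2) with (- (C - B)) by field.
  replace ((B - A + (2 * C - (A + B))) / 2) with (C - A) by field.
  rewrite sin_neg. ring.
Qed.

Lemma sin_PI_pos x : 0 < x < 1 -> 0 < sin (PI * x).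
Proof. intros. pose proof PI_RGT_0. apply sin_gt_0; nra. Qed.

Lemma sin_PI_neg x : -1 < x < 0 -> sin (PI * x) < 0.
Proof. intros. pose proof PI_RGT_0. apply sin_lt_0_var; nra. Qed.

Lemma cross_cpt3_neg s t r : s < t < s + 1 -> s < r < t -> cross (cpt s) (cpt t) (cpt r) < 0.
Proof.
  intros. rewrite cross_cpt3.
  assert (0 < sin (PI * (t - s))) by (apply sin_PI_pos; lra).
  assert (sin (PI * (r - t)) < 0) by (apply sin_PI_neg; lra).
  assert (0 < sin (PI * (r - s))) by (apply sin_PI_pos; lra).
  assert (0 < sin (PI * (t - s)) * sin (PI * (r - s))) by nra. nra.
Qed.

Lemma cross_cpt3_pos s t r : s < t < s + 1 -> t < r < s + 1 -> 0 < cross (cpt s) (cpt t) (cpt r).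
Proof.
  intros. rewrite cross_cpt3.
  assert (0 < sin (PI * (t - s))) by (apply sin_PI_pos; lra).
  assert (0 < sin (PI * (r - t))) by (apply sin_PI_pos; lra).
  assert (0 < sin (PI * (r - s))) by (apply sin_PI_pos; lra).
  assert (0 < sin (PI * (t - s)) * sin (PI * (r - s))) by nra. nra.
Qed.

Lemma cross_same_end a b : cross a b b = 0.
Proof. unfold cross; ring. Qed.

Lemma cross_same_start a b : cross a b a = 0.
Proof. unfold cross; ring. Qed.

Lemma cross_swap a b X : cross b a X = - cross a b X.
Proof. unfold cross; ring. Qed.

Lemma cross_cpt3_nonneg s t r :
  s < t < s + 1 -> t <= r <= s + 1 -> 0 <= cross (cpt s) (cpt t) (cpt r).
Proof.
  intros Hst Hr. destruct (Req_dec r t) as [->|Hrt]; [rewrite cross_same_end; lra|].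
  destruct (Req_dec r (s + 1)) as [->|Hrs]; [rewrite cpt_plus1, cross_same_start; lra|].
  left; apply cross_cpt3_pos; lra.
Qed.

Lemma cross_cpt3_nonpos s t r :
  s < t < s + 1 -> s <= r <= t -> cross (cpt s) (cpt t) (cpt r) <= 0.
Proof.
  intros Hst Hr. destruct (Req_dec r s) as [->|Hrs]; [rewrite cross_same_start; lra|].
  destruct (Req_dec r t) as [->|Hrt]; [rewrite cross_same_end; lra|].
  left; apply cross_cpt3_neg; lra.
Qed.

Lemma cpt_neq_on_arc s t : s < t < s + 1 -> cpt t <> cpt s.
Proof.
  intros Hst E. pose proof (cross_cpt3_pos s t ((t + s + 1) / 2) Hst ltac:(lra)) as H.
  rewrite E in H. unfold cross in H. ring_simplify in H. lra.
Qed.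

Lemma continuous_cross_cpt s X t : continuous (fun t => cross (cpt s) (cpt t) X) t.
Proof.
  unfold cross, cpt; simpl.
  apply continuous_Rminus; apply continuous_Rmult; try apply continuous_const;
    apply continuous_Rminus; try apply continuous_const.
  - apply continuous_cos_comp, continuous_Rmult; [apply continuous_const|apply continuous_id].
  - apply continuous_sin_comp, continuous_Rmult; [apply continuous_const|apply continuous_id].
Qed.

Definition in_open_segment (a b X : pt) : Prop :=
  exists l, 0 < l < 1 /\
    fst X = fst a + l * (fst b - fst a) /\ snd X = snd a + l * (snd b - snd a).

Lemma cross_open_segment_pos c d a b X :
  in_open_segment a b X -> 0 <= cross c d a -> 0 <= cross c d b ->
  (0 < cross c d a \/ 0 < cross c d b) -> 0 < cross c d X.
Proof.
  intros (l & Hl & E1 & E2) Ha Hb Hab.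
  replace (cross c d X) with ((1 - l) * cross c d a + l * cross c d b)
    by (unfold cross; rewrite E1, E2; ring).
  assert (0 <= (1 - l) * cross c d a) by (apply Rmult_le_pos; lra).
  assert (0 <= l * cross c d b) by (apply Rmult_le_pos; lra).
  destruct Hab.
  - assert (0 < (1 - l) * cross c d a) by (apply Rmult_lt_0_compat; lra). lra.
  - assert (0 < l * cross c d b) by (apply Rmult_lt_0_compat; lra). lra.
Qed.

Lemma chord_open_segment a b X :
  fst a ^ 2 + snd a ^ 2 = 1 -> fst b ^ 2 + snd b ^ 2 = 1 -> a <> b ->
  inD X -> cross a b X = 0 -> in_open_segment a b X.
Proof.
  unfold inD. destruct a as [a1 a2], b as [b1 b2], X as [x1 x2]; unfold cross; cbn [fst snd].
  intros Ha Hb Hab HX Hc.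
  set (d1 := b1 - a1). set (d2 := b2 - a2).
  assert (Hd : 0 < d1 * d1 + d2 * d2).
  { destruct (Req_dec d1 0); destruct (Req_dec d2 0); try nra.
    exfalso; apply Hab; f_equal; unfold d1, d2 in *; lra. }
  set (l := ((x1 - a1) * d1 + (x2 - a2) * d2) / (d1 * d1 + d2 * d2)).
  assert (K1 : (x1 - a1) * (d1 * d1 + d2 * d2) - ((x1 - a1) * d1 + (x2 - a2) * d2) * d1
                = - d2 * ((b1 - a1) * (x2 - a2) - (b2 - a2) * (x1 - a1))) by (unfold d1, d2; ring).
  assert (K2 : (x2 - a2) * (d1 * d1 + d2 * d2) - ((x1 - a1) * d1 + (x2 - a2) * d2) * d2
                = d1 * ((b1 - a1) * (x2 - a2) - (b2 - a2) * (x1 - a1))) by (unfold d1, d2; ring).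
  rewrite Hc in K1, K2.
  assert (E1 : x1 = a1 + l * d1) by (unfold l; field_simplify_eq; lra).
  assert (E2 : x2 = a2 + l * d2) by (unfold l; field_simplify_eq; lra).
  assert (Hq : x1 ^ 2 + x2 ^ 2 = 1 + l * (l - 1) * (d1 * d1 + d2 * d2)).
  { assert (x1 ^ 2 + x2 ^ 2 - (1 + l * (l - 1) * (d1 * d1 + d2 * d2))
            = (a1 ^ 2 + a2 ^ 2 - 1) + l * ((b1 ^ 2 + b2 ^ 2) - (a1 ^ 2 + a2 ^ 2)))
      by (rewrite E1, E2; unfold d1, d2; ring).
    rewrite Ha, Hb in H. lra. }
  assert (l * (l - 1) < 0).
  { destruct (Rle_dec 0 (l * (l - 1))); [nra|lra]. }
  exists l. repeat split; try assumption; nra.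
Qed.

(** * Triangles and their support lines *)

Lemma cross_collinear a b P Q R0 :
  a <> b -> cross a b P = 0 -> cross a b Q = 0 -> cross a b R0 = 0 -> cross P Q R0 = 0.
Proof.
  intros Hab HP HQ HR.
  assert (I1 : (fst b - fst a) * cross P Q R0
               = (fst Q - fst P) * (cross a b R0 - cross a b P)
                 - (fst R0 - fst P) * (cross a b Q - cross a b P)) by (unfold cross; ring).
  assert (I2 : (snd b - snd a) * cross P Q R0
               = (snd Q - snd P) * (cross a b R0 - cross a b P)
                 - (snd R0 - snd P) * (cross a b Q - cross a b P)) by (unfold cross; ring).
  rewrite HP, HQ, HR in I1, I2.
  destruct (Req_dec (fst b - fst a) 0) as [H1|H1].
  - assert (H2 : snd b - snd a <> 0).
    { intro; apply Hab; destruct a, b; simpl in *; f_equal; lra. }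
    apply (Rmult_eq_reg_l (snd b - snd a)); lra.
  - apply (Rmult_eq_reg_l (fst b - fst a)); lra.
Qed.

Lemma in_triangle_P P Q R0 : in_triangle P Q R0 P.
Proof. exists 1, 0, 0. repeat split; try lra; simpl; ring. Qed.

Lemma in_triangle_Q P Q R0 : in_triangle P Q R0 Q.
Proof. exists 0, 1, 0. repeat split; try lra; simpl; ring. Qed.

Lemma in_triangle_R P Q R0 : in_triangle P Q R0 R0.
Proof. exists 0, 0, 1. repeat split; try lra; simpl; ring. Qed.

Lemma cross_in_triangle a b P Q R0 x :
  in_triangle P Q R0 x ->
  exists al be ga, 0 <= al /\ 0 <= be /\ 0 <= ga /\ al + be + ga = 1 /\
    cross a b x = al * cross a b P + be * cross a b Q + ga * cross a b R0.
Proof.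
  intros (al & be & ga & H1 & H2 & H3 & H4 & H5 & H6). exists al, be, ga.
  do 4 (split; [assumption|]). unfold cross. rewrite H5, H6.
  replace ga with (1 - al - be) by lra. ring.
Qed.

Lemma convex3_pos al be ga u v w :
  0 <= al -> 0 <= be -> 0 <= ga -> al + be + ga = 1 -> 0 < u -> 0 < v -> 0 < w ->
  0 < al * u + be * v + ga * w.
Proof.
  intros. destruct (Req_dec al 0); [destruct (Req_dec be 0)|].
  - assert (0 < ga * w) by (apply Rmult_lt_0_compat; lra). nra.
  - assert (0 < be * v) by (apply Rmult_lt_0_compat; lra). nra.
  - assert (0 < al * u) by (apply Rmult_lt_0_compat; lra). nra.
Qed.

Lemma in_triangle_inD P Q R0 x : inD P -> inD Q -> inD R0 -> in_triangle P Q R0 x -> inD x.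
Proof.
  unfold inD. intros HP HQ HR (a & b & c & Ha & Hb & Hc & Hs & -> & ->).
  destruct P as [p1 p2], Q as [q1 q2], R0 as [r1 r2]; cbn [fst snd] in *.
  assert (Jensen :
    (a * p1 + b * q1 + c * r1) ^ 2 + (a * p2 + b * q2 + c * r2) ^ 2
    = a * (p1 ^ 2 + p2 ^ 2) + b * (q1 ^ 2 + q2 ^ 2) + c * (r1 ^ 2 + r2 ^ 2)
      - a * b * ((p1 - q1) ^ 2 + (p2 - q2) ^ 2) - a * c * ((p1 - r1) ^ 2 + (p2 - r2) ^ 2)
      - b * c * ((q1 - r1) ^ 2 + (q2 - r2) ^ 2)).
  { replace c with (1 - a - b) by lra. ring. }
  pose proof (convex3_pos a b c (1 - (p1 ^ 2 + p2 ^ 2)) (1 - (q1 ^ 2 + q2 ^ 2))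
                (1 - (r1 ^ 2 + r2 ^ 2)) Ha Hb Hc Hs ltac:(lra) ltac:(lra) ltac:(lra)).
  assert (0 <= a * b * ((p1 - q1) ^ 2 + (p2 - q2) ^ 2)) by
    (apply Rmult_le_pos; [nra | apply Rplus_le_le_0_compat; apply pow2_ge_0]).
  assert (0 <= a * c * ((p1 - r1) ^ 2 + (p2 - r2) ^ 2)) by
    (apply Rmult_le_pos; [nra | apply Rplus_le_le_0_compat; apply pow2_ge_0]).
  assert (0 <= b * c * ((q1 - r1) ^ 2 + (q2 - r2) ^ 2)) by
    (apply Rmult_le_pos; [nra | apply Rplus_le_le_0_compat; apply pow2_ge_0]).
  nra.
Qed.

Definition supports (U : pt -> Prop) (a b : pt) : Prop :=
  (forall x, U x -> 0 <= cross a b x) /\ (exists x, U x /\ cross a b x = 0).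

Lemma supports_triangle_vertex P Q R0 a b :
  supports (in_triangle P Q R0) a b ->
  cross a b P = 0 \/ cross a b Q = 0 \/ cross a b R0 = 0.
Proof.
  intros [Hleft [x [Hx Hc]]].
  pose proof (Hleft _ (in_triangle_P P Q R0)).
  pose proof (Hleft _ (in_triangle_Q P Q R0)).
  pose proof (Hleft _ (in_triangle_R P Q R0)).
  destruct (cross_in_triangle a b _ _ _ _ Hx) as (al & be & ga & A1 & A2 & A3 & A4 & A5).
  destruct (Req_dec (cross a b P) 0); [tauto|].
  destruct (Req_dec (cross a b Q) 0); [tauto|].
  destruct (Req_dec (cross a b R0) 0); [tauto|].
  pose proof (convex3_pos al be ga (cross a b P) (cross a b Q) (cross a b R0) A1 A2 A3 A4
                ltac:(lra) ltac:(lra) ltac:(lra)).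
  lra.
Qed.

Lemma nondegenerate_triangle_off_line P Q R0 a b :
  cross P Q R0 <> 0 -> a <> b -> exists x, in_triangle P Q R0 x /\ cross a b x <> 0.
Proof.
  intros Hnd Hab.
  destruct (Req_dec (cross a b P) 0) as [HP|HP];
    [|exists P; split; [apply in_triangle_P|exact HP]].
  destruct (Req_dec (cross a b Q) 0) as [HQ|HQ];
    [|exists Q; split; [apply in_triangle_Q|exact HQ]].
  destruct (Req_dec (cross a b R0) 0) as [HR|HR];
    [|exists R0; split; [apply in_triangle_R|exact HR]].
  exfalso. exact (Hnd (cross_collinear a b P Q R0 Hab HP HQ HR)).
Qed.

(** * The map psi of a triangle and its lifts *)

Lemma cross_cpt_short_chords s d X :
  0 < d < 1/2 -> fst X ^ 2 + snd X ^ 2 < cos (PI * d) ^ 2 ->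
  0 < cross (cpt s) (cpt (s + d)) X /\ cross (cpt s) (cpt (s + 1 - d)) X < 0.
Proof.
  intros Hd HX. pose proof PI_RGT_0.
  assert (Hsin : 0 < sin (PI * d)) by (apply sin_PI_pos; lra).
  assert (Hcos : 0 < cos (PI * d)) by (apply cos_gt_0; nra).
  assert (Hdot : forall phi, Rabs (fst X * cos phi + snd X * sin phi) < cos (PI * d)).
  { intros phi. set (D := fst X * cos phi + snd X * sin phi).
    assert (D ^ 2 < cos (PI * d) ^ 2).
    { pose proof (sin2_cos2 phi). unfold Rsqr in *.
      assert (D ^ 2 + (fst X * sin phi - snd X * cos phi) ^ 2
              = (fst X ^ 2 + snd X ^ 2) * (sin phi * sin phi + cos phi * cos phi))
        by (unfold D; ring).
      pose proof (pow2_ge_0 (fst X * sin phi - snd X * cos phi)). nra. }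
    apply Rabs_def1; nra. }
  rewrite !cross_cpt_cpt. split.
  - replace (PI * (s + d) - PI * s) with (PI * d) by ring.
    pose proof (Hdot (PI * s + PI * (s + d))) as H1. apply Rabs_def2 in H1.
    apply Rmult_lt_0_compat; lra.
  - replace (PI * (s + 1 - d) - PI * s) with (PI - PI * d) by ring.
    rewrite sin_PI_x, cos_minus, cos_PI, sin_PI.
    pose proof (Hdot (PI * s + PI * (s + 1 - d))) as H1. apply Rabs_def2 in H1.
    assert (0 < 2 * sin (PI * d)) by lra. nra.
Qed.

Lemma exists_short_arc r : r < 1 -> exists d, 0 < d < 1/2 /\ r < cos (PI * d) ^ 2.
Proof.
  intros Hr. pose proof PI_RGT_0. pose proof PI_4.
  set (e := 1 - Rmax r 0).
  assert (He : 0 < e <= 1) by (unfold e; pose proof (Rmax_l r 0); pose proof (Rmax_r r 0);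
                                 pose proof (Rmax_lub_lt r 0 1 Hr ltac:(lra)); lra).
  exists (e / 8). split; [lra|].
  assert (Hs : sin (PI * (e / 8)) < e / 2).
  { assert (sin (PI * (e / 8)) < PI * (e / 8)) by (apply sin_lt_x; nra). nra. }
  assert (0 < sin (PI * (e / 8))) by (apply sin_PI_pos; lra).
  pose proof (sin2_cos2 (PI * (e / 8))). unfold Rsqr in *.
  pose proof (Rmax_l r 0). unfold e in *. nra.
Qed.

Lemma triangle_left_of_vertices a b P Q R0 :
  0 <= cross a b P -> 0 <= cross a b Q -> 0 <= cross a b R0 ->
  forall x, in_triangle P Q R0 x -> 0 <= cross a b x.
Proof.
  intros HP HQ HR x Hx.
  destruct (cross_in_triangle a b P Q R0 x Hx) as (al & be & ga & H1 & H2 & H3 & _ & ->).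
  assert (0 <= al * cross a b P) by (apply Rmult_le_pos; lra).
  assert (0 <= be * cross a b Q) by (apply Rmult_le_pos; lra).
  assert (0 <= ga * cross a b R0) by (apply Rmult_le_pos; lra).
  lra.
Qed.

Lemma Rmin3_eq_0 a b c :
  Rmin (Rmin a b) c = 0 -> 0 <= a /\ 0 <= b /\ 0 <= c /\ (a = 0 \/ b = 0 \/ c = 0).
Proof.
  unfold Rmin. destruct (Rle_dec a b); destruct (Rle_dec _ c); intros; lra.
Qed.

Lemma psi_triangle_exists P Q R0 s :
  triangle_in_D P Q R0 -> exists w, is_psi (in_triangle P Q R0) s w.
Proof.
  intros (HP & HQ & HR & _). unfold inD in *.
  set (nP := fst P ^ 2 + snd P ^ 2). set (nQ := fst Q ^ 2 + snd Q ^ 2).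
  set (nR := fst R0 ^ 2 + snd R0 ^ 2).
  destruct (exists_short_arc (Rmax nP (Rmax nQ nR)))
    as (d & Hd & Hcos); [repeat apply Rmax_lub_lt; assumption|].
  pose proof (Rmax_l nP (Rmax nQ nR)). pose proof (Rmax_r nP (Rmax nQ nR)).
  pose proof (Rmax_l nQ nR). pose proof (Rmax_r nQ nR).
  destruct (cross_cpt_short_chords s d P Hd) as [P1 P2]; [fold nP; lra|].
  destruct (cross_cpt_short_chords s d Q Hd) as [Q1 Q2]; [fold nQ; lra|].
  destruct (cross_cpt_short_chords s d R0 Hd) as [R1 R2]; [fold nR; lra|].
  (* The minimum over the vertices of t |-> cross (cpt s) (cpt t) V is positive
     just after s and negative just before s + 1; at a zero, the chord from s
     supports the triangle. *)
  set (c := fun V t => cross (cpt s) (cpt t) V).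
  set (f := fun t => Rmin (Rmin (c P t) (c Q t)) (c R0 t)).
  assert (Hf : forall t, continuous f t).
  { intro t. unfold f, c. repeat apply continuous_Rmin; apply continuous_cross_cpt. }
  assert (Hf1 : 0 < f (s + d)) by (unfold f, c; repeat apply Rmin_glb_lt; assumption).
  assert (Hf2 : f (s + 1 - d) < 0) by (unfold f, c; eapply Rle_lt_trans; [apply Rmin_r|exact R2]).
  destruct (IVT_gen_consistent f (s + d) (s + 1 - d) 0 Hf) as [ts [Hts Hf0]].
  { rewrite Rmin_right, Rmax_left; lra. }
  rewrite Rmin_left, Rmax_right in Hts by lra.
  destruct (Rmin3_eq_0 _ _ _ Hf0) as (GP & GQ & GR & Htouch). unfold c in *.
  exists (piS ts). unfold is_psi. rewrite cpt_piS.
  split; [apply piS_range|]. split; [apply cpt_neq_on_arc; lra|]. split.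
  - destruct Htouch as [E|[E|E]];
      [exists P; split; [apply in_triangle_P|exact E]
      |exists Q; split; [apply in_triangle_Q|exact E]
      |exists R0; split; [apply in_triangle_R|exact E]].
  - apply triangle_left_of_vertices; assumption.
Qed.

Lemma psi_triangle_spec P Q R0 v :
  triangle_in_D P Q R0 -> is_psi (in_triangle P Q R0) (piS v) (psi (in_triangle P Q R0) v).
Proof. intros H. unfold psi. apply epsilon_spec, psi_triangle_exists, H. Qed.

Lemma pigeonhole_4_3 {T : Type} (A B C v0 v1 v2 v3 : T) :
  In v0 [A; B; C] -> In v1 [A; B; C] -> In v2 [A; B; C] -> In v3 [A; B; C] ->
  v0 = v1 \/ v0 = v2 \/ v0 = v3 \/ v1 = v2 \/ v1 = v3 \/ v2 = v3.
Proof.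
  simpl. intros [<-|[<-|[<-|[]]]] [<-|[<-|[<-|[]]]] [<-|[<-|[<-|[]]]] [<-|[<-|[<-|[]]]]; tauto.
Qed.

Section LiftOfPsi.

Variable U : pt -> Prop.
Variable F : R -> R.
Hypothesis U_inD : forall x, U x -> inD x.
Hypothesis U_off_line : forall a b, a <> b -> exists x, U x /\ cross a b x <> 0.
Hypothesis psi_U_spec : forall v, is_psi U (piS v) (psi U v).
Hypothesis F_lift : is_lift (psi U) F.

Lemma lift_is_psi x : is_psi U (piS x) (piS (F x)).
Proof.
  destruct F_lift as (_ & HF & _). rewrite HF.
  pose proof (psi_U_spec (piS x)) as H. rewrite piS_id in H by apply piS_range. exact H.
Qed.

Lemma lift_cpt_neq x : cpt (F x) <> cpt x.
Proof. destruct (lift_is_psi x) as (_ & H & _). rewrite !cpt_piS in H. exact H. Qed.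

Lemma lift_supports x : supports U (cpt x) (cpt (F x)).
Proof.
  destruct (lift_is_psi x) as (_ & _ & H1 & H2). rewrite !cpt_piS in H1, H2.
  split; assumption.
Qed.

Lemma lift_chord_point x z :
  U z -> cross (cpt x) (cpt (F x)) z = 0 -> in_open_segment (cpt x) (cpt (F x)) z.
Proof.
  intros Hz Hc. apply chord_open_segment; try apply cpt_on_circle; auto.
  intros E. apply (lift_cpt_neq x). auto.
Qed.

Lemma lift_disp x : x < F x < x + 1.
Proof.
  destruct F_lift as (Hc & _ & H0).
  assert (Hint : forall y k, F y - y <> IZR k).
  { intros y k E. apply (lift_cpt_neq y).
    replace (F y) with (y + IZR k) by lra. apply cpt_plus_IZR. }
  set (g := fun y => F y - y).
  assert (Hg : forall y, continuous g y)
    by (intro; apply continuous_Rminus; [apply Hc|apply continuous_id]).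
  assert (F 0 <> 0) by (intro E; apply (Hint 0 0%Z); simpl; lra).
  split; apply Rnot_le_lt; intros Hx.
  - destruct (IVT_gen_consistent g 0 x 0 Hg) as [z [_ Hz]].
    + unfold g, Rmin, Rmax. destruct (Rle_dec _ _); lra.
    + exact (Hint z 0%Z Hz).
  - destruct (IVT_gen_consistent g 0 x 1 Hg) as [z [_ Hz]].
    + unfold g, Rmin, Rmax. destruct (Rle_dec _ _); lra.
    + exact (Hint z 1%Z Hz).
Qed.

Lemma lift_plus1 x : F (x + 1) = F x + 1.
Proof.
  destruct F_lift as (_ & HF & _).
  assert (E : piS (F (x + 1)) = piS (F x)).
  { rewrite !HF. f_equal. exact (piS_plus_IZR x 1). }
  destruct (piS_eq_int_shift _ _ E) as [k Hk].
  pose proof (lift_disp x). pose proof (lift_disp (x + 1)).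
  assert (Hk1 : (0 < k < 2)%Z) by (split; apply lt_IZR; simpl; lra).
  replace k with 1%Z in Hk by lia. simpl in Hk. lra.
Qed.

Lemma lift_lt x y : x < y < x + 1 -> F x < F y.
Proof.
  intros Hxy. apply Rnot_le_lt. intros Hle.
  pose proof (lift_disp x). pose proof (lift_disp y).
  destruct (lift_supports y) as [_ (z & Hz & Hc)].
  destruct (lift_supports x) as [Hleft _].
  pose proof (Hleft z Hz).
  assert (Hneg : 0 < cross (cpt (F x)) (cpt x) z).
  { apply (cross_open_segment_pos _ _ (cpt y) (cpt (F y))); [now apply lift_chord_point| | |];
      rewrite cross_swap.
    - pose proof (cross_cpt3_neg x (F x) y ltac:(lra) ltac:(lra)). lra.
    - pose proof (cross_cpt3_nonpos x (F x) (F y) ltac:(lra) ltac:(lra)). lra.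
    - left. pose proof (cross_cpt3_neg x (F x) y ltac:(lra) ltac:(lra)). lra. }
  rewrite cross_swap in Hneg. lra.
Qed.

Lemma lift_le x y : x <= y -> F x <= F y.
Proof.
  intros Hxy. destruct (piS_int_shift (y - x)) as [k Hk]. pose proof (piS_range (y - x)).
  assert (Hk0 : 0 <= IZR k).
  { assert ((-1 < k)%Z) by (apply lt_IZR; simpl; lra). apply IZR_le. lia. }
  replace y with ((x + piS (y - x)) + IZR k) by lra.
  rewrite (degree_one_plus_IZR F lift_plus1).
  destruct (Req_dec (piS (y - x)) 0) as [E|E].
  - rewrite E, Rplus_0_r. lra.
  - pose proof (lift_lt x (x + piS (y - x)) ltac:(lra)). lra.
Qed.

Lemma lift_iter_lt x i j : (i < j)%nat -> F^[i] x < F^[j] x.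
Proof.
  induction 1 as [|j Hij IH]; simpl.
  - apply lift_disp.
  - pose proof (lift_disp (F^[j] x)). lra.
Qed.

Lemma lift_iter_le x i j : (i <= j)%nat -> F^[i] x <= F^[j] x.
Proof.
  intros Hij. destruct (Nat.eq_dec i j) as [->|Hne]; [lra|].
  left. apply lift_iter_lt. lia.
Qed.

Lemma lift_iter2_lt x : F (F x) < x + 1.
Proof.
  apply Rnot_le_lt. intros Hge.
  pose proof (lift_disp x). pose proof (lift_disp (F x)).
  destruct (Req_dec (F (F x)) (x + 1)) as [E|E].
  - (* the chords x -> F x and F x -> x + 1 are opposite, so U lies on their common line *)
    destruct (U_off_line (cpt x) (cpt (F x))) as (V & HV & HcV).
    { intros E'. apply (lift_cpt_neq x). auto. }
    destruct (lift_supports x) as [H1 _]. destruct (lift_supports (F x)) as [H2 _].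
    specialize (H1 V HV). specialize (H2 V HV).
    rewrite E, cpt_plus1, cross_swap in H2. lra.
  - destruct (lift_supports x) as [_ (z & Hz & Hc)].
    destruct (lift_supports (F x)) as [Hleft _]. specialize (Hleft z Hz).
    assert (0 < cross (cpt (F (F x))) (cpt (F x)) z); [|rewrite cross_swap in H1; lra].
    pose proof (cross_cpt3_neg (F x) (F (F x)) (x + 1) ltac:(lra) ltac:(lra)).
    rewrite cpt_plus1 in H1.
    apply (cross_open_segment_pos _ _ (cpt x) (cpt (F x))); [now apply lift_chord_point| | |];
      rewrite cross_swap; rewrite ?cross_same_start; lra.
Qed.

Lemma lift_chords_separated x i j V :
  F^[4] x <= x + 1 -> (i < j <= 3)%nat -> U V ->
  cross (cpt (F^[j] x)) (cpt (F^[S j] x)) V = 0 ->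
  0 < cross (cpt (F^[i] x)) (cpt (F^[S i] x)) V.
Proof.
  intros H4 Hij HV HcV.
  pose proof (lift_disp (F^[i] x)) as Di. pose proof (lift_disp (F^[j] x)) as Dj.
  change (F (F^[i] x)) with (F^[S i] x) in Di. change (F (F^[j] x)) with (F^[S j] x) in Dj.
  pose proof (lift_iter_le x (S i) j ltac:(lia)).
  pose proof (lift_iter_le x (S j) 4 ltac:(lia)).
  pose proof (lift_iter_le x 0 i ltac:(lia)) as Hx. simpl in Hx.
  apply (cross_open_segment_pos _ _ (cpt (F^[j] x)) (cpt (F^[S j] x)));
    [now apply lift_chord_point|apply cross_cpt3_nonneg; lra|apply cross_cpt3_nonneg; lra|].
  destruct (Nat.eq_dec j (S i)) as [->|Hj].
  - right. pose proof (lift_iter2_lt (F^[i] x)). apply cross_cpt3_pos; simpl in *; lra.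
  - left. pose proof (lift_iter_lt x (S i) j ltac:(lia)). apply cross_cpt3_pos; simpl in *; lra.
Qed.

Lemma lift_iter4_gt (A B C : pt) :
  (forall V, In V [A; B; C] -> U V) ->
  (forall a b, supports U a b -> exists V, In V [A; B; C] /\ cross a b V = 0) ->
  forall x, x + 1 < F^[4] x.
Proof.
  intros HU Hvert x. apply Rnot_le_lt. intros H4.
  assert (Hsep : forall i j V, (i < j <= 3)%nat -> In V [A; B; C] ->
            cross (cpt (F^[j] x)) (cpt (F^[S j] x)) V = 0 ->
            cross (cpt (F^[i] x)) (cpt (F^[S i] x)) V <> 0).
  { intros i j V Hij HV Hc E. pose proof (lift_chords_separated x i j V H4 Hij (HU V HV) Hc). lra. }
  destruct (Hvert _ _ (lift_supports (F^[0] x))) as (v0 & I0 & C0).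
  destruct (Hvert _ _ (lift_supports (F^[1] x))) as (v1 & I1 & C1).
  destruct (Hvert _ _ (lift_supports (F^[2] x))) as (v2 & I2 & C2).
  destruct (Hvert _ _ (lift_supports (F^[3] x))) as (v3 & I3 & C3).
  destruct (pigeonhole_4_3 A B C v0 v1 v2 v3 I0 I1 I2 I3) as [E|[E|[E|[E|[E|E]]]]];
    [ apply (Hsep 0%nat 1%nat v1) | apply (Hsep 0%nat 2%nat v2) | apply (Hsep 0%nat 3%nat v3)
    | apply (Hsep 1%nat 2%nat v2) | apply (Hsep 1%nat 3%nat v3) | apply (Hsep 2%nat 3%nat v3) ];
    try lia; try assumption; rewrite <- E; assumption.
Qed.

End LiftOfPsi.

(** * Orbits of period five *)

Definition rotation_pattern (f : R -> R) (a : nat -> R) : Prop :=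
  forall i, (i < 5)%nat -> f (piS (a i)) = piS (a ((i + 2) mod 5)%nat).

Lemma rotation_pattern_shift f a :
  rotation_pattern f a ->
  rotation_pattern f (fun i => match i with 0%nat => a 4%nat - 1 | S j => a j end).
Proof.
  intros Ha i Hi.
  pose proof (Ha 0%nat ltac:(lia)). pose proof (Ha 1%nat ltac:(lia)).
  pose proof (Ha 2%nat ltac:(lia)). pose proof (Ha 3%nat ltac:(lia)).
  pose proof (Ha 4%nat ltac:(lia)). simpl in *.
  destruct i as [|[|[|[|[|i]]]]]; simpl; rewrite ?piS_minus1; auto; lia.
Qed.

Lemma rotation_pattern_normalize f n a :
  0 <= a 0%nat < 1 -> (forall i, (i < 4)%nat -> a i < a (S i)) -> a 4%nat < a 0%nat + 1 ->
  rotation_pattern f a -> (forall i, (i < 5 - n)%nat -> a i < 1) ->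
  exists b, 0 <= b 0%nat /\ b 4%nat < 1 /\ (forall i, (i < 4)%nat -> b i < b (S i)) /\
    rotation_pattern f b.
Proof.
  revert a. induction n as [|n IH]; intros a H0 Hinc H4 Hpat Hlt.
  - exists a. repeat split; try apply H0; try assumption. apply Hlt. lia.
  - destruct (Rlt_dec (a 4%nat) 1) as [Ha4|Ha4].
    { exists a. repeat split; try apply H0; assumption. }
    (* rotate the largest point, which lies in [1, 2), to the front *)
    pose proof (Hinc 0%nat ltac:(lia)). pose proof (Hinc 1%nat ltac:(lia)).
    pose proof (Hinc 2%nat ltac:(lia)). pose proof (Hinc 3%nat ltac:(lia)).
    apply (IH (fun i => match i with 0%nat => a 4%nat - 1 | S j => a j end)); try lra.
    + intros i Hi. destruct i as [|[|[|[|i]]]]; lra || lia.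
    + apply rotation_pattern_shift, Hpat.
    + intros [|i] Hi; [lra|]. apply Hlt. lia.
Qed.

Section PsiTriangle.

Variables (P Q R0 : pt) (F : R -> R).
Hypothesis Htri : triangle_in_D P Q R0.
Hypothesis HF : is_lift (psi (in_triangle P Q R0)) F.
Local Notation T := (in_triangle P Q R0).
Local Notation ps := (psi (in_triangle P Q R0)).

Lemma triangle_inD x : T x -> inD x.
Proof. destruct Htri as (HP & HQ & HR & _). apply in_triangle_inD; assumption. Qed.

Lemma triangle_off_line a b : a <> b -> exists x, T x /\ cross a b x <> 0.
Proof. destruct Htri as (_ & _ & _ & Hnd). apply nondegenerate_triangle_off_line, Hnd. Qed.

Lemma triangle_psi_spec v : is_psi T (piS v) (ps v).
Proof. apply psi_triangle_spec, Htri. Qed.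

Lemma triangle_lift_plus1 x : F (x + 1) = F x + 1.
Proof. exact (lift_plus1 T F triangle_psi_spec HF x). Qed.

Lemma triangle_lift_le x y : x <= y -> F x <= F y.
Proof. exact (lift_le T F triangle_inD triangle_psi_spec HF x y). Qed.

Lemma triangle_iter_plus_IZR n x k : F^[n] (x + IZR k) = F^[n] x + IZR k.
Proof. exact (iter_plus_IZR F triangle_lift_plus1 n x k). Qed.

Lemma triangle_iter2_lt x : F (F x) < x + 1.
Proof. exact (lift_iter2_lt T F triangle_inD triangle_off_line triangle_psi_spec HF x). Qed.

Lemma triangle_iter5_bounds x : x + 1 < F^[5] x < x + 3.
Proof.
  assert (H4 : x + 1 < F^[4] x).
  { apply (lift_iter4_gt T F triangle_inD triangle_off_line triangle_psi_spec HF P Q R0).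
    - simpl. intros V [<-|[<-|[<-|[]]]];
        [apply in_triangle_P|apply in_triangle_Q|apply in_triangle_R].
    - intros a b Hs. simpl.
      destruct (supports_triangle_vertex P Q R0 a b Hs) as [E|[E|E]]; eauto 6. }
  pose proof (lift_disp T F triangle_psi_spec HF (F^[4] x)).
  pose proof (lift_disp T F triangle_psi_spec HF x).
  pose proof (triangle_iter2_lt (F^[3] x)). pose proof (triangle_iter2_lt (F x)).
  simpl in *. lra.
Qed.

Lemma triangle_shift_at_piS x : F^[5] x = x + 2 -> F^[5] (piS x) = piS x + 2.
Proof.
  intros H. destruct (piS_int_shift x) as [k Hk].
  pose proof (triangle_iter_plus_IZR 5 (piS x) k) as E. rewrite <- Hk, H in E. lra.
Qed.

Lemma triangle_fixed5_iff_shift :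
  (exists al, 0 <= al < 1 /\ ps^[5] al = al) <-> (exists x, F^[5] x = x + 2).
Proof.
  split.
  - intros (al & Hal & Hfix). exists al.
    assert (E : piS (F^[5] al) = piS al)
      by (rewrite (is_lift_iter _ _ HF), piS_id; assumption).
    destruct (piS_eq_int_shift _ _ E) as [k Hk]. pose proof (triangle_iter5_bounds al).
    assert (Hk2 : (1 < k < 3)%Z) by (split; apply lt_IZR; lra).
    replace k with 2%Z in Hk by lia. exact Hk.
  - intros [x Hx]. exists (piS x). split; [apply piS_range|].
    rewrite <- (piS_id (piS x)) at 1 by apply piS_range.
    rewrite <- (is_lift_iter _ _ HF), (triangle_shift_at_piS x Hx).
    rewrite (piS_plus_IZR (piS x) 2). apply piS_id, piS_range.
Qed.

Lemma triangle_rot_iff_shift : rot_number F = Finite (2 / 5) <-> (exists x, F^[5] x = x + 2).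
Proof.
  assert (Hcont : forall x, continuous F x) by apply HF.
  replace (2 / 5) with (INR 2 / INR 5) by (simpl; field).
  split.
  - intros Hrot. destruct (periodic_of_rot_number F Hcont triangle_lift_plus1 triangle_lift_le
                             5 (INR 2) ltac:(lia) Hrot) as [x Hx].
    exists x. rewrite Hx. simpl. ring.
  - intros [x Hx]. apply (rot_number_periodic F triangle_lift_plus1 triangle_lift_le 5 2 x).
    + lia.
    + rewrite Hx. simpl. ring.
Qed.

Lemma triangle_fiber_iff_shift :
  (exists al, 0 <= al < 1 /\ forall x, piS x = al -> F^[5] x = x + 2) <->
  (exists x, F^[5] x = x + 2).
Proof.
  split.
  - intros (al & Hal & H). exists al. apply H, piS_id, Hal.
  - intros [x0 Hx0]. exists (piS x0). split; [apply piS_range|].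
    intros x Hx. destruct (piS_int_shift x) as [k Hk]. rewrite Hx in Hk. rewrite Hk.
    rewrite triangle_iter_plus_IZR, (triangle_shift_at_piS x0 Hx0). ring.
Qed.

Lemma triangle_pattern_of_shift x0 :
  F^[5] x0 = x0 + 2 -> 0 <= x0 < 1 ->
  exists a, 0 <= a 0%nat /\ a 4%nat < 1 /\ (forall i, (i < 4)%nat -> a i < a (S i)) /\
    rotation_pattern ps a.
Proof.
  intros H5 Hx0.
  pose proof (triangle_iter2_lt x0). pose proof (triangle_iter2_lt (F x0)).
  pose proof (triangle_iter2_lt (F^[2] x0)). pose proof (triangle_iter2_lt (F^[3] x0)).
  pose proof (triangle_iter2_lt (F^[4] x0)).
  assert (H6 : F (F^[5] x0) = F x0 + 2)
    by (rewrite H5; exact (triangle_iter_plus_IZR 1 x0 2)).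
  simpl in *.
  (* the orbit of x0 visits the five points of [x0, x0 + 1) in the order 0, 2, 4, 1, 3 *)
  set (a := fun i => match i with
                     | 0%nat => x0 | 1%nat => F (F (F x0)) - 1 | 2%nat => F x0
                     | 3%nat => F (F (F (F x0))) - 1 | _ => F (F x0) end).
  apply (rotation_pattern_normalize ps 5 a); unfold a; try lra.
  - intros i Hi. destruct i as [|[|[|[|i]]]]; lra || lia.
  - destruct HF as (_ & HFp & _).
    intros i Hi. destruct i as [|[|[|[|[|i]]]]]; simpl; try lia; rewrite ?piS_minus1, <- HFp;
      try reflexivity.
    rewrite H5. exact (piS_plus_IZR x0 2).
  - intros i Hi. lia.
Qed.

Lemma triangle_pattern_iff_shift :
  (exists a, 0 <= a 0%nat /\ a 4%nat < 1 /\ (forall i, (i < 4)%nat -> a i < a (S i)) /\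
     rotation_pattern ps a) <->
  (exists x, F^[5] x = x + 2).
Proof.
  split.
  - intros (a & H0 & H4 & Hinc & Hpat). apply triangle_fixed5_iff_shift.
    pose proof (Hinc 0%nat ltac:(lia)). pose proof (Hinc 1%nat ltac:(lia)).
    pose proof (Hinc 2%nat ltac:(lia)). pose proof (Hinc 3%nat ltac:(lia)).
    assert (Hstep : forall i, (i < 5)%nat -> ps (a i) = a ((i + 2) mod 5)%nat).
    { intros i Hi. specialize (Hpat i Hi).
      assert (Hrange : forall j, (j < 5)%nat -> 0 <= a j < 1).
      { intros j Hj. destruct j as [|[|[|[|[|j]]]]]; simpl in *; lra || lia. }
      rewrite !piS_id in Hpat by (apply Hrange; try apply Nat.mod_upper_bound; lia).
      exact Hpat. }
    exists (a 0%nat). split; [lra|]. simpl.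
    rewrite (Hstep 0%nat) by lia; simpl. rewrite (Hstep 2%nat) by lia; simpl.
    rewrite (Hstep 4%nat) by lia; simpl. rewrite (Hstep 1%nat) by lia; simpl.
    rewrite (Hstep 3%nat) by lia. reflexivity.
  - intros [x Hx]. apply (triangle_pattern_of_shift (piS x));
      [apply triangle_shift_at_piS, Hx|apply piS_range].
Qed.

End PsiTriangle.

Theorem lemma4p1 (P Q R0 : pt) (F : R -> R) :
  triangle_in_D P Q R0 ->
  is_lift (psi (in_triangle P Q R0)) F ->
  let ps := psi (in_triangle P Q R0) in
  ((exists al : R, 0 <= al < 1 /\ Nat.iter 5 ps al = al) <->
   rot_number F = Finite (2 / 5)) /\
  (rot_number F = Finite (2 / 5) <->
   (exists a : nat -> R,
      0 <= a 0%nat /\ a 4%nat < 1 /\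
      (forall i : nat, (i < 4)%nat -> a i < a (S i)) /\
      (forall i : nat, (i < 5)%nat -> ps (piS (a i)) = piS (a ((i + 2) mod 5)%nat)))) /\
  ((exists a : nat -> R,
      0 <= a 0%nat /\ a 4%nat < 1 /\
      (forall i : nat, (i < 4)%nat -> a i < a (S i)) /\
      (forall i : nat, (i < 5)%nat -> ps (piS (a i)) = piS (a ((i + 2) mod 5)%nat))) <->
   (exists al : R, 0 <= al < 1 /\
      forall x : R, piS x = al -> Nat.iter 5 F x = x + 2)).
Proof.
  intros Htri HF ps.
  pose proof (triangle_fixed5_iff_shift P Q R0 F Htri HF) as E1.
  pose proof (triangle_rot_iff_shift P Q R0 F Htri HF) as E2.
  pose proof (triangle_pattern_iff_shift P Q R0 F Htri HF) as E3.
  pose proof (triangle_fiber_iff_shift P Q R0 F Htri HF) as E4.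
  unfold rotation_pattern in E3. subst ps.
  rewrite E1, E2, E3, E4. tauto.
Qed.
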